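(* Let $T_n$ be the transitive tournament on $n$ vertices. Its characteristic polynomial is $$\phi(T_n,t)=\det(tI-H(T_n))=\sum_{j=0}^{\lfloor n/2\rfloor}(-1)^j\binom{n}{2j}t^{n-2j}=\tfrac12(t+i)^n+\tfrac12(t-i)^n.$$ The eigenvalues of $H(T_n)$ (as a multiset) are $\sum_{k=1}^{(n-1)/2} 2\sin\frac{k(2j+1)\pi}{n}$, $j=0,\dots,n-1$, when $n$ is odd, and $(-1)^j+\sum_{k=1}^{(n-2)/2}2\sin\frac{k(2j+1)\pi}{n}$, $j=0,\dots,n-1$, when $n$ is even.
   Context: The transitive tournament $T_n$ has vertices $1,\dots,n$ and an arc $uv$ for every $u<v$. For a digraph $X$, the Hermitian adjacency matrix $H(X)$ has $(u,v)$-entry $1$ if $uv$ and $vu$ are arcs, $i$ if only $uv$ is an arc, $-i$ if only $vu$ is an arc, and $0$ otherwise. *)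

From HB Require Import structures.
From mathcomp Require Import all_boot all_order all_algebra.
From mathcomp Require Import complex.
From mathcomp Require Import reals trigo.
Set Implicit Arguments. Unset Strict Implicit. Unset Printing Implicit Defensive.
Import Order.TTheory GRing.Theory Num.Theory.
Local Open Scope ring_scope.

Definition hermAdj (R : rcfType) (n : nat) (arc : rel 'I_n) : 'M[R[i]]_n :=
  \matrix_(u, v)
    if arc u v && arc v u then 1
    else if arc u v then 'i%C
    else if arc v u then - 'i%C
    else 0.

(* Transitive tournament T_n: vertices 0..n-1 (i.e. 1..n shifted),
   arc uv iff u < v. *)
Definition transTour (n : nat) : rel 'I_n := fun u v => (u < v)%N.

Definition tourEig (R : realType) (n j : nat) : R :=
  if odd n then
    \sum_(1 <= k < ((n - 1)./2).+1) 2 * sin ((k * (2 * j + 1))%:R * pi / n%:R)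
  else
    (-1) ^+ j + \sum_(1 <= k < ((n - 2)./2).+1)
                   2 * sin ((k * (2 * j + 1))%:R * pi / n%:R).

Arguments transTour n : clear implicits.
Arguments tourEig R n j : clear implicits.

From HB Require Import structures.
From mathcomp Require Import all_boot all_order all_algebra.
From mathcomp Require Import complex.
From mathcomp Require Import reals trigo.
From mathcomp Require Import ring zify.
Import Order.TTheory GRing.Theory Num.Theory.
Local Open Scope ring_scope.

(* The characteristic polynomial of H(T_n) is the determinant of the matrix M
   with 'X on the diagonal, -i above it and i below it. Once the first row is
   subtracted from the others, adding c to every entry of M only changes the
   first row, so det (M + c) is affine in c; for c = i and c = -i the matrix is
   triangular, hence 2 det M = (X + i)^n + (X - i)^n, and the binomial formula
   gives the coefficients. With θ_j = (2j+1)π/(2n) and t_j = cot θ_j we have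
   (t_j ± i) sin θ_j = e^(±iθ_j), so the n distinct reals t_j are the roots of
   (t + i)^n + (t - i)^n; the sine sum defining the claimed eigenvalues
   telescopes to cot θ_j. *)

Section ConstantTriangles.
Variable R : comNzRingType.

Definition diag_up_low_mx (x a b : R) n : 'M[R]_n :=
  \matrix_(i, j) if i == j then x else if (i < j)%N then a else b.

Lemma trmx_diag_up_low x a b n :
  (diag_up_low_mx x a b n)^T = diag_up_low_mx x b a n.
Proof.
apply/matrixP => i j; rewrite !mxE -!val_eqE /=.
by case: ltngtP.
Qed.

Lemma diag_up_low_add_const x a b c n :
  diag_up_low_mx x a b n + const_mx c = diag_up_low_mx (x + c) (a + c) (b + c) n.
Proof. by apply/matrixP => i j; rewrite !mxE; case: eqP => //; case: ltnP. Qed.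

Lemma det_diag_up_low0 x b n : \det (diag_up_low_mx x 0 b n) = x ^+ n.
Proof.
rewrite det_trig; last by apply/is_trig_mxP => i j ltij; rewrite mxE -val_eqE ltij ltn_eqF.
by rewrite (eq_bigr (fun=> x)) ?prodr_const ?card_ord // => i _; rewrite mxE eqxx.
Qed.

Lemma det_diag_low_up0 x a n : \det (diag_up_low_mx x a 0 n) = x ^+ n.
Proof. by rewrite -det_tr trmx_diag_up_low det_diag_up_low0. Qed.

Lemma det_subr_row0 n (A : 'M[R]_n.+1) :
  \det (\matrix_(i, j) (A i j - (i != 0)%:R * A 0 j)) = \det A.
Proof.
pose c : 'cV[R]_n.+1 := \col_i (i != 0)%:R.
have -> : \matrix_(i, j) (A i j - (i != 0)%:R * A 0 j)
          = (1%:M - c *m delta_mx 0 0) *m A.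
  rewrite mulmxBl mul1mx -mulmxA -rowE.
  by apply/matrixP => i j; rewrite !mxE big_ord1 !mxE.
rewrite det_mulmx det_trig ?big1 ?mul1r // => [i _|].
  by rewrite !mxE big_ord1 !mxE !eqxx /=; case: (i == 0); rewrite ?mulr0 ?mul0r subr0.
apply/is_trig_mxP => i j ltij; rewrite !mxE big_ord1 !mxE -val_eqE ltn_eqF //=.
have /negbTE -> : j != 0 by rewrite -val_eqE /= -lt0n (leq_ltn_trans _ ltij).
by rewrite mulr0 subr0.
Qed.

Lemma det_add_const_mx_pm n (A : 'M[R]_n) c :
  \det (A + const_mx c) + \det (A + const_mx (- c)) = \det A *+ 2.
Proof.
case: n A => [|n] A; first by rewrite !det_mx00.
pose red (M : 'M[R]_n.+1) := \matrix_(i, j) (M i j - (i != 0)%:R * M 0 j).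
pose C := \matrix_(i, j) if i == 0 then 1 else red A i j.
have linE t : \det (A + const_mx t) = \det A + t * \det C.
  rewrite -[LHS]det_subr_row0 -(@det_subr_row0 _ A) -/(red _) -/(red A).
  rewrite -[\det (red A)]mul1r.
  apply: (determinant_multilinear (i0 := 0)).
  - by apply/rowP => j; rewrite !mxE !eqxx /= !mul0r !subr0 mul1r mulr1.
  - apply/matrixP => i j; rewrite !mxE eq_sym (negbTE (neq_lift 0 i)) /=; ring.
  - apply/matrixP => i j; rewrite !mxE eq_sym (negbTE (neq_lift 0 i)) /=; ring.
by rewrite !linE addrACA -mulrDl subrr mul0r addr0.
Qed.

Lemma det_diag_up_low_skew x c n :
  \det (diag_up_low_mx x (- c) c n) *+ 2 = (x + c) ^+ n + (x - c) ^+ n.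
Proof.
by rewrite -(det_add_const_mx_pm _ _ c) !diag_up_low_add_const addNr subrr
  det_diag_up_low0 det_diag_low_up0.
Qed.
End ConstantTriangles.


Arguments diag_up_low_mx {R} x a b n.

Lemma char_poly_transTour (R : rcfType) n :
  char_poly (hermAdj R (transTour n)) =
  \det (diag_up_low_mx 'X (- ('i%C)%:P) ('i%C)%:P n).
Proof.
congr (\det _); apply/matrixP => i j; rewrite !mxE /transTour -val_eqE /=.
case: ltngtP => _ /=; rewrite ?mulr0n ?sub0r ?polyCN ?opprK //.
by rewrite mulr1n subr0.
Qed.

Lemma sum_ord_even (V : nmodType) (F : nat -> V) n :
  (forall k, odd k -> F k = 0) ->
  \sum_(k < n.+1) F k = \sum_(j < n./2.+1) F (2 * j)%N.
Proof.
move=> F_odd; elim: n => [|n IH]; first by rewrite !big_ord1.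
rewrite big_ord_recr IH /= uphalf_half; have n_eq := odd_double_half n.
case: (boolP (odd n)) n_eq => [n_odd|n_even] /= n_eq.
  by rewrite add1n [RHS]big_ord_recr /=; congr (_ + F _); lia.
by rewrite add0n F_odd ?addr0 //= n_even.
Qed.

Lemma binomial_sum_pm (R : comNzRingType) (c : R) n :
  ('X + c%:P) ^+ n + ('X - c%:P) ^+ n =
  \sum_(j < n./2.+1) ((c ^+ 2) ^+ j * ('C(n, 2 * j))%:R) *: 'X^(n - 2 * j) *+ 2.
Proof.
rewrite -polyCN !exprDn -big_split /=.
rewrite (eq_bigr (fun k : 'I_n.+1 => ((c ^+ k + (- c) ^+ k) * ('C(n, k))%:R) *: 'X^(n - k))); last first.
  by move=> k _; rewrite -!polyC_exp -!mul_polyC !polyCM polyCD polyC_natr; ring.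
rewrite (@sum_ord_even _ (fun k => ((c ^+ k + (- c) ^+ k) * ('C(n, k))%:R) *: 'X^(n - k))).
  by apply: eq_bigr => j _; rewrite !exprM sqrrN -mulr2n mulrnAl scalerMnl.
by move=> k k_odd; rewrite exprNn -signr_odd k_odd expr1 mulN1r subrr mul0r scale0r.
Qed.

Section TourEigenvalues.
Variable R : realType.

Lemma sum_sin_mul_sin (y : R) m :
  (\sum_(1 <= k < m.+1) 2 * sin (k%:R * (y * 2))) * sin y
  = cos y - cos ((2 * m + 1)%:R * y).
Proof.
elim: m => [|m IH]; first by rewrite big_geq // mul0r mul1r subrr.
rewrite big_nat_recr //= mulrDl IH.
have -> : (2 * m + 1)%:R * y = m.+1%:R * (y * 2) - y by rewrite natrD natrM; ring.
have -> : (2 * m.+1 + 1)%:R * y = m.+1%:R * (y * 2) + y by rewrite natrD natrM; ring.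
by rewrite cosB cosD; ring.
Qed.

Lemma odd_pihalfE j : (2 * j.+1 + 1)%:R * pi / 2 = (2 * j + 1)%:R * pi / 2 + pi :> R.
Proof. by rewrite !natrD !natrM; field. Qed.

Lemma cos_odd_pihalf j : cos ((2 * j + 1)%:R * pi / 2) = 0 :> R.
Proof.
elim: j => [|j IH]; first by rewrite mul1r cos_pihalf.
by rewrite odd_pihalfE cosDpi IH oppr0.
Qed.

Lemma sin_odd_pihalf j : sin ((2 * j + 1)%:R * pi / 2) = (-1) ^+ j :> R.
Proof.
elim: j => [|j IH]; first by rewrite mul1r sin_pihalf.
by rewrite odd_pihalfE sinDpi IH exprS mulN1r.
Qed.

Lemma sin_frac_pi_gt0 m N : (0 < m < N)%N -> 0 < sin (m%:R * pi / N%:R : R).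
Proof.
case/andP => m_gt0 lt_mN; have N_gt0 : (0 < N)%N by lia.
apply: sin_gt0_pi; rewrite divr_gt0 ?mulr_gt0 ?pi_gt0 ?ltr0n //=.
by rewrite ltr_pdivrMr ?ltr0n // mulrC ltr_pM2l ?pi_gt0 ?ltr_nat.
Qed.

Definition eig_angle n j : R := (2 * j + 1)%:R * pi / (2 * n)%:R.

Lemma mulr_eig_angle n j : (0 < n)%N ->
  n%:R * eig_angle n j = (2 * j + 1)%:R * pi / 2.
Proof.
move=> n_gt0; have nz : n%:R != 0 :> R by rewrite pnatr_eq0 -lt0n.
by rewrite /eig_angle natrM; field.
Qed.

Lemma sin_eig_angle_gt0 n j : (j < n)%N -> 0 < sin (eig_angle n j).
Proof. by move=> lt_jn; apply: sin_frac_pi_gt0; lia. Qed.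

Lemma tourEig_mul_sin n j : (0 < n)%N ->
  tourEig R n j * sin (eig_angle n j) = cos (eig_angle n j).
Proof.
move=> n_gt0; set y := eig_angle n j.
have nz : n%:R != 0 :> R by rewrite pnatr_eq0 -lt0n.
have sumE m : \sum_(1 <= k < m.+1) 2 * sin ((k * (2 * j + 1))%:R * pi / n%:R)
    = \sum_(1 <= k < m.+1) 2 * sin (k%:R * (y * 2)) :> R.
  by apply: eq_big_nat => k _; rewrite /y /eig_angle !natrM natrD; congr (2 * sin _); field.
have n_eq := odd_double_half n; rewrite /tourEig; case: ifP => n_odd.
  rewrite sumE sum_sin_mul_sin.
  have -> : (2 * (n - 1)./2 + 1)%N = n by move: n_eq; rewrite n_odd; lia.
  by rewrite mulr_eig_angle // cos_odd_pihalf subr0.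
rewrite mulrDl sumE sum_sin_mul_sin.
have -> : (2 * (n - 2)./2 + 1)%:R = n%:R - 1 :> R.
  by apply/eqP; rewrite eq_sym subr_eq natr1 eqr_nat; move: n_eq; rewrite n_odd; lia.
by rewrite mulrBl mul1r mulr_eig_angle // cosB cos_odd_pihalf sin_odd_pihalf; ring.
Qed.

Lemma tourEig_inj n j k : (j < n)%N -> (k < n)%N ->
  tourEig R n j = tourEig R n k -> j = k.
Proof.
wlog le_jk : j k / (j <= k)%N => [hwlog|lt_jn lt_kn eq_jk].
  by case: (leqP j k) => [|/ltnW] le ? ? ?; [|apply/esym]; apply: hwlog.
apply/eqP; rewrite eqn_leq le_jk leqNgt; apply/negP => lt_jk.
have n_gt0 : (0 < n)%N by lia.
have Hj := tourEig_mul_sin n j n_gt0; have Hk := tourEig_mul_sin n k n_gt0.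
have : sin (eig_angle n k - eig_angle n j) = 0.
  by rewrite sinB -Hk -Hj eq_jk; ring.
move/eqP; rewrite gt_eqF //.
have -> : eig_angle n k - eig_angle n j = (2 * (k - j))%:R * pi / (2 * n)%:R.
  rewrite /eig_angle; have -> : (2 * k + 1 = 2 * (k - j) + (2 * j + 1))%N by lia.
  by rewrite natrD; ring.
by apply: sin_frac_pi_gt0; lia.
Qed.

Definition cis (t : R) : R[i] := (cos t)%:C%C + 'i%C * (sin t)%:C%C.

Lemma cisD a b : cis a * cis b = cis (a + b).
Proof.
rewrite /cis cosD sinD rmorphB rmorphD !rmorphM.
have i2 : 'i%C * 'i%C = -1 :> R[i] by rewrite -expr2 sqr_i.
set ca := (cos a)%:C%C; set cb := (cos b)%:C%C.
set sa := (sin a)%:C%C; set sb := (sin b)%:C%C.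
transitivity (ca * cb - sa * sb + 'i%C * (sa * cb + ca * sb) + sa * sb * ('i%C * 'i%C + 1)).
  by ring.
by rewrite i2 addNr mulr0 addr0.
Qed.

Lemma cisX a n : cis a ^+ n = cis (n%:R * a).
Proof.
elim: n => [|n IH]; first by rewrite mul0r /cis cos0 sin0 rmorph0 rmorph1 mulr0 addr0.
by rewrite exprS IH cisD mulrSr mulrDl mul1r addrC.
Qed.

Lemma root_tourEig n j : (j < n)%N ->
  root (('X + ('i%C)%:P) ^+ n + ('X - ('i%C)%:P) ^+ n) (tourEig R n j)%:C%C.
Proof.
move=> lt_jn; have n_gt0 : (0 < n)%N by lia.
set y := eig_angle n j; have eig_y := tourEig_mul_sin n j n_gt0.
have sin_nz : (sin y)%:C%C != 0 :> R[i].
  by rewrite -(rmorph0 (real_complex R)) (inj_eq (@complexI _)) gt_eqF ?sin_eig_angle_gt0.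
rewrite /root !hornerE; apply/eqP/(mulIf (expf_neq0 n sin_nz)).
rewrite mul0r mulrDl -!exprMn.
have -> : ((tourEig R n j)%:C%C + 'i%C) * (sin y)%:C%C = cis y.
  by rewrite /cis mulrDl -rmorphM eig_y addrC.
have -> : ((tourEig R n j)%:C%C - 'i%C) * (sin y)%:C%C = cis (- y).
  by rewrite /cis cosN sinN rmorphN mulrBl -rmorphM eig_y mulrN.
rewrite !cisX /cis mulrN cosN sinN rmorphN mulr_eig_angle // cos_odd_pihalf rmorph0.
by rewrite mulrN !add0r subrr.
Qed.

End TourEigenvalues.

Theorem theorem10p5 (R : realType) (n : nat) :
  let phi := char_poly (hermAdj R (transTour n)) : {poly R[i]} in
  [/\ phi = \sum_(j < n./2.+1) (((-1) ^+ j * ('C(n, 2 * j))%:R) *: 'X^(n - 2 * j)),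
      phi = 2^-1 *: (('X + ('i%C)%:P) ^+ n) + 2^-1 *: (('X - ('i%C)%:P) ^+ n)
    & phi = \prod_(j < n) ('X - ((tourEig R n j)%:C%C)%:P)].
Proof.
move=> phi.
have two_unit : (2 : R[i]) \is a GRing.unit by rewrite unitfE pnatr_eq0.
have phi2 : phi *+ 2 = ('X + ('i%C)%:P) ^+ n + ('X - ('i%C)%:P) ^+ n.
  by rewrite /phi char_poly_transTour det_diag_up_low_skew.
have phiE : phi = 2^-1 *: (('X + ('i%C)%:P) ^+ n + ('X - ('i%C)%:P) ^+ n).
  by rewrite -phi2 -scalerMnr scalerMnl -mulr_natr mulVr ?scale1r.
split.
- by rewrite phiE binomial_sum_pm sqr_i sumrMnl -scalerMnr scalerMnl -mulr_natr mulVr ?scale1r.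
- by rewrite phiE scalerDr.
pose rs := [seq (tourEig R n j)%:C%C | j <- index_iota 0 n].
have -> : \prod_(j < n) ('X - (tourEig R n j)%:C%C%:P) = \prod_(z <- rs) ('X - z%:P).
  by rewrite big_map big_mkord.
rewrite [LHS](all_roots_prod_XsubC (rs := rs)) ?(monicP (char_poly_monic _)) ?scale1r //.
- by rewrite size_char_poly size_map size_iota subn0.
- apply/allP => z /mapP [j]; rewrite mem_index_iota => /andP [_ lt_jn] ->.
  by rewrite phiE rootZ ?root_tourEig ?invr_eq0 ?pnatr_eq0.
rewrite uniq_rootsE map_inj_in_uniq ?iota_uniq // => j k.
by rewrite !mem_index_iota => /andP [_ lt_jn] /andP [_ lt_kn] /complexI /tourEig_inj; apply.
Qed.
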